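(* Let $\mathbf A$ be an additive category, ${\tt G}$ a digraph, $P\subseteq SG({\tt G})$ a squared and faithful sub-poset, and $\epsilon$ a sign assignment on $P$. For any covariant functor $\mathcal F\colon\mathbf P\to\mathbf A$ define \[C^n_{\mathcal F}(P)=\bigoplus_{{\tt H}\in P,\ \ell({\tt H})=n}\mathcal F({\tt H}),\qquad d^n=\sum_{{\tt H}\in P,\ \ell({\tt H})=n}\ \sum_{{\tt H}'\in P,\ {\tt H}\prec{\tt H}'}(-1)^{\epsilon({\tt H},{\tt H}')}\mathcal F({\tt H}\prec{\tt H}').\] Then $d^n\circ d^{n-1}=0$ for every $n\in\mathbb N$; in particular $(C^*_{\mathcal F}(P),d^* )$ is a cochain complex.
   Context: A digraph ${\tt G}=(V,E)$ has finite $V$ and $E\subseteq(V\times V)\setminus\{(v,v)\}$. $SG({\tt G})$ is the poset of all subgraphs ${\tt H}$ of ${\tt G}$ ($V({\tt H})\subseteq V({\tt G})$, $E({\tt H})\subseteq E({\tt G})$, ${\tt H}$ a digraph) ordered by being a proper subgraph. For a poset, $x\,\tilde\triangleleft\,y$ ($y$ covers $x$) means $x\triangleleft y$ with no $z$ strictly between. A sub-poset $S'$ of $S$ (with induced order) is faithful if its covering relation equals the restriction to $S'$ of the covering relation of $S$; it is squared if for any $x,y,z\in S'$ with $x\,\tilde\triangleleft\,y\,\tilde\triangleleft\,z$ there is a unique $y'\neq y$ with $x\,\tilde\triangleleft\,y'\,\tilde\triangleleft\,z$ (such $x,y,y',z$ form a square). A sign assignment on a poset is a choice of $\epsilon_{x,y}\in\mathbb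 Z_2$ for each covering pair $x\,\tilde\triangleleft\,y$ such that $\epsilon_{x,y}+\epsilon_{y,z}\equiv\epsilon_{x,y'}+\epsilon_{y',z}+1\pmod 2$ for every square. In the formulas, ${\tt H}\prec{\tt H}'$ denotes the covering relation in $P$. The level of ${\tt H}\in P$ is $\ell({\tt H})=\#E({\tt H})+\#V({\tt H})-\min\{\#E({\tt H}')+\#V({\tt H}')\mid{\tt H}'\in P\}$. $\mathbf P$ is the category with objects the elements of $P$ and a unique morphism $x\to y$ iff $x\le y$. *)

From HB Require Import structures.
From mathcomp Require Import all_boot all_algebra.

Set Implicit Arguments.
Unset Strict Implicit.
Unset Printing Implicit Defensive.
Import GRing.Theory.
Local Open Scope ring_scope.

(* (indexed by an arbitrary finite type; the empty biproduct is the    *)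
(* zero object).                                                       *)
Record AddCat : Type := MkAddCat {
  Ob : Type;
  Mor : Ob -> Ob -> zmodType;
  mcomp : forall a b c : Ob, Mor b c -> Mor a b -> Mor a c;
  idm : forall a : Ob, Mor a a;
  compA : forall a b c d (h : Mor c d) (g : Mor b c) (f : Mor a b),
      mcomp h (mcomp g f) = mcomp (mcomp h g) f;
  comp1m : forall a b (f : Mor a b), mcomp (idm b) f = f;
  compm1 : forall a b (f : Mor a b), mcomp f (idm a) = f;
  comp_addl : forall a b c (g g' : Mor b c) (f : Mor a b),
      mcomp (g + g') f = mcomp g f + mcomp g' f;
  comp_addr : forall a b c (g : Mor b c) (f f' : Mor a b),
      mcomp g (f + f') = mcomp g f + mcomp g f';
  biprod : forall I : finType, (I -> Ob) -> Ob;
  bp_inj : forall (I : finType) (X : I -> Ob) (i : I), Mor (X i) (biprod X);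
  bp_proj : forall (I : finType) (X : I -> Ob) (i : I), Mor (biprod X) (X i);
  bp_proj_inj : forall (I : finType) (X : I -> Ob) (i : I),
      mcomp (bp_proj X i) (bp_inj X i) = idm (X i);
  bp_proj_inj0 : forall (I : finType) (X : I -> Ob) (i j : I),
      i != j -> mcomp (bp_proj X i) (bp_inj X j) = 0;
  bp_sum : forall (I : finType) (X : I -> Ob),
      \sum_(i : I) mcomp (bp_inj X i) (bp_proj X i) = idm (biprod X)
}.

Arguments Mor : clear implicits.
Arguments mcomp {_ _ _ _}.
Arguments idm {_}.
Arguments biprod {_ I}.
Arguments bp_inj {_ I} X i.
Arguments bp_proj {_ I} X i.

(* type V and edge set E (loops excluded by hypothesis).  A (candidate) *)
(* subgraph is a pair (vertex set, edge set).                          *)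
Definition sgraph (V : finType) := ({set V} * {set V * V})%type.

Definition is_subgraph (V : finType) (E : {set V * V}) (H : sgraph V) : bool :=
  (H.2 \subset E) && [forall e in H.2, (e.1 \in H.1) && (e.2 \in H.1)].

Definition SG (V : finType) (E : {set V * V}) : {set sgraph V} :=
  [set H | is_subgraph E H].

Definition sg_le (V : finType) (H H' : sgraph V) : bool :=
  (H.1 \subset H'.1) && (H.2 \subset H'.2).
Definition sg_lt (V : finType) (H H' : sgraph V) : bool :=
  sg_le H H' && (H != H').

Definition covers_in (V : finType) (S : {set sgraph V}) (x y : sgraph V) : bool :=
  [&& x \in S, y \in S, sg_lt x y & [forall z in S, ~~ (sg_lt x z && sg_lt z y)]].

Definition faithful (V : finType) (E : {set V * V}) (P : {set sgraph V}) : Prop :=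
  forall x y, x \in P -> y \in P -> covers_in P x y = covers_in (SG E) x y.

Definition squared (V : finType) (P : {set sgraph V}) : Prop :=
  forall x y z, covers_in P x y -> covers_in P y z ->
    exists! y', y' != y /\ covers_in P x y' /\ covers_in P y' z.

(* sign assignment, with values in Z_2 = bool (addition = xor) *)
Definition sign_assignment (V : finType) (P : {set sgraph V})
    (eps : sgraph V -> sgraph V -> bool) : Prop :=
  forall x y y' z, covers_in P x y -> covers_in P y z ->
    covers_in P x y' -> covers_in P y' z -> y != y' ->
    (eps x y (+) eps y z) = ~~ (eps x y' (+) eps y' z).

(* covariant functor from the thin category P to A:
   Fob on objects, Fmor x y h : F(x) -> F(y) for h : x <= y *)
Definition is_functor (A : AddCat) (V : finType) (P : {set sgraph V})
    (Fob : sgraph V -> Ob A)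
    (Fmor : forall x y : sgraph V, sg_le x y -> Mor A (Fob x) (Fob y)) : Prop :=
  (forall x (h : sg_le x x), x \in P -> Fmor x x h = idm (Fob x)) /\
  (forall x y z (hxy : sg_le x y) (hyz : sg_le y z) (hxz : sg_le x z),
      x \in P -> y \in P -> z \in P ->
      Fmor x z hxz = mcomp (Fmor y z hyz) (Fmor x y hxy)).

(* F applied to x -> y when x <= y (0 otherwise; never used then) *)
Definition Fmap (A : AddCat) (V : finType) (Fob : sgraph V -> Ob A)
    (Fmor : forall x y : sgraph V, sg_le x y -> Mor A (Fob x) (Fob y))
    (x y : sgraph V) : Mor A (Fob x) (Fob y) :=
  (if sg_le x y as b return sg_le x y = b -> Mor A (Fob x) (Fob y)
   then fun h => Fmor x y h else fun _ => 0) (erefl _).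

Definition gsize (V : finType) (H : sgraph V) : nat := (#|H.1| + #|H.2|)%N.
Definition minsize (V : finType) (P : {set sgraph V}) : nat :=
  \big[minn/(#|{: V}| + #|{: V * V}|)%N]_(H in P) gsize H.
Definition level (V : finType) (P : {set sgraph V}) (H : sgraph V) : nat :=
  (gsize H - minsize P)%N.

Definition lvl (V : finType) (P : {set sgraph V}) (n : nat) :=
  {H : sgraph V | (H \in P) && (level P H == n)}.

Definition sgn (Z : zmodType) (b : bool) (f : Z) : Z := if b then - f else f.

Definition cochain (A : AddCat) (V : finType) (P : {set sgraph V})
    (Fob : sgraph V -> Ob A) (n : nat) : Ob A :=
  biprod (fun H : lvl P n => Fob (val H)).

(* d^n : C^n -> C^{n+1}.  Every H' in P covering H has level n+1, so the
   inner sum over covers of H is taken inside C^{n+1}. *)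
Definition differential (A : AddCat) (V : finType) (P : {set sgraph V})
    (eps : sgraph V -> sgraph V -> bool) (Fob : sgraph V -> Ob A)
    (Fmor : forall x y : sgraph V, sg_le x y -> Mor A (Fob x) (Fob y))
    (n : nat) : Mor A (cochain P Fob n) (cochain P Fob n.+1) :=
  \sum_(H : lvl P n) \sum_(H' : lvl P n.+1 | covers_in P (val H) (val H'))
     sgn (eps (val H) (val H'))
       (mcomp (bp_inj (fun K : lvl P n.+1 => Fob (val K)) H')
          (mcomp (Fmap Fmor (val H) (val H'))
                (bp_proj (fun K : lvl P n => Fob (val K)) H))).

Arguments is_functor {A V} P Fob Fmor.
Arguments differential {A V} P eps Fob Fmor n.

From Pilot Require Import Defs.
From HB Require Import structures.
From mathcomp Require Import all_boot all_order all_algebra.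

(* Expanding both differentials, the component of d^{n+1} d^n from F(H) to F(K)
   is the sum over the elements H' of P with H < H' < K of
   (-1)^(eps(H,H') + eps(H',K)) F(H < K), by functoriality.  Since subgraphs are
   graded by #V + #E and P is faithful, covers raise the level by exactly one,
   so these H' are the middle elements of the squares from H to K: there are
   none or exactly two of them, and then the sign assignment makes the two
   terms cancel. *)

Set Implicit Arguments.
Unset Strict Implicit.
Unset Printing Implicit Defensive.
Import Order.TTheory GRing.Theory.
Local Open Scope ring_scope.

Section AdditiveCategory.
Variable A : AddCat.

Lemma mcomp0m a b c (f : Mor A a b) : mcomp (0 : Mor A b c) f = 0.
Proof. by apply: (addrI (mcomp 0 f)); rewrite -comp_addl !addr0. Qed.

Lemma mcompm0 a b c (g : Mor A b c) : mcomp g (0 : Mor A a b) = 0.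
Proof. by apply: (addrI (mcomp g 0)); rewrite -comp_addr !addr0. Qed.

Lemma mcompNm a b c (g : Mor A b c) (f : Mor A a b) : mcomp (- g) f = - mcomp g f.
Proof. by apply: (addrI (mcomp g f)); rewrite -comp_addl !subrr mcomp0m. Qed.

Lemma mcompmN a b c (g : Mor A b c) (f : Mor A a b) : mcomp g (- f) = - mcomp g f.
Proof. by apply: (addrI (mcomp g f)); rewrite -comp_addr !subrr mcompm0. Qed.

Lemma mcomp_sgnm s a b c (g : Mor A b c) (f : Mor A a b) :
  mcomp (sgn s g) f = sgn s (mcomp g f).
Proof. by case: s; rewrite /sgn ?mcompNm. Qed.

Lemma mcompm_sgn s a b c (g : Mor A b c) (f : Mor A a b) :
  mcomp g (sgn s f) = sgn s (mcomp g f).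
Proof. by case: s; rewrite /sgn ?mcompmN. Qed.

Lemma mcomp_summ a b c (I : Type) (r : seq I) (p : pred I)
    (G : I -> Mor A b c) (f : Mor A a b) :
  mcomp (\sum_(i <- r | p i) G i) f = \sum_(i <- r | p i) mcomp (G i) f.
Proof.
apply: (big_rec2 (fun u v => mcomp v f = u)); first exact: mcomp0m.
by move=> i u v _ <-; rewrite comp_addl.
Qed.

Lemma mcompm_sum a b c (I : Type) (r : seq I) (p : pred I)
    (g : Mor A b c) (F : I -> Mor A a b) :
  mcomp g (\sum_(i <- r | p i) F i) = \sum_(i <- r | p i) mcomp g (F i).
Proof.
apply: (big_rec2 (fun u v => mcomp g v = u)); first exact: mcompm0.
by move=> i u v _ <-; rewrite comp_addr.
Qed.

Lemma bp_copair_inj (I : finType) (X : I -> Ob A) b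
    (f : forall i, Mor A (X i) b) (j : I) :
  mcomp (\sum_i mcomp (f i) (bp_proj X i)) (bp_inj X j) = f j.
Proof.
rewrite mcomp_summ (bigD1 j) //= big1 => [|i nij].
  by rewrite addr0 -Defs.compA bp_proj_inj compm1.
by rewrite -Defs.compA bp_proj_inj0 // mcompm0.
Qed.

End AdditiveCategory.

Lemma sgn_addb (Z : zmodType) s t (x : Z) : sgn s (sgn t x) = sgn (s (+) t) x.
Proof. by case: s; case: t; rewrite /sgn ?opprK. Qed.

Lemma sgn_sum (Z : zmodType) s (I : Type) (r : seq I) (p : pred I) (F : I -> Z) :
  sgn s (\sum_(i <- r | p i) F i) = \sum_(i <- r | p i) sgn s (F i).
Proof. by case: s; rewrite /sgn ?sumrN. Qed.

Lemma sgn_negb_cancel (Z : zmodType) s (x : Z) : sgn (~~ s) x + sgn s x = 0.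
Proof. by case: s; rewrite /sgn ?addNr ?subrr. Qed.

Section Subgraphs.
Variables (V : finType) (E : {set V * V}).

Lemma sg_le_trans (x y z : sgraph V) : sg_le x y -> sg_le y z -> sg_le x z.
Proof.
case/andP=> xy1 xy2 /andP[yz1 yz2].
by rewrite /sg_le (subset_trans xy1 yz1) (subset_trans xy2 yz2).
Qed.

Lemma covers_lt (S : {set sgraph V}) x y : covers_in S x y -> sg_lt x y.
Proof. by case/and4P. Qed.

Lemma covers_le (S : {set sgraph V}) x y : covers_in S x y -> sg_le x y.
Proof. by move/covers_lt/andP=> []. Qed.

Lemma SG_setU1_vertex (x : sgraph V) v :
  x \in SG E -> (v |: x.1, x.2) \in SG E.
Proof.
rewrite !inE => /andP[xE /forall_inP xV]; rewrite /is_subgraph /= xE.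
by apply/forall_inP => e /xV /andP[e1 e2]; rewrite !inE e1 e2 !orbT.
Qed.

Lemma SG_setU1_edge (x : sgraph V) e :
  x \in SG E -> e \in E -> e.1 \in x.1 -> e.2 \in x.1 -> (x.1, e |: x.2) \in SG E.
Proof.
rewrite !inE => /andP[xE /forall_inP xV] eE e1 e2.
rewrite /is_subgraph /= subUset sub1set eE xE /=.
by apply/forall_inP => f; rewrite !inE => /orP[/eqP -> | /xV]; rewrite ?e1 ?e2.
Qed.

(* A vertex of y missing from x, or failing that an edge of y missing from x,
   can be added to x without leaving SG(G). *)
Lemma SG_lt_step x y : x \in SG E -> y \in SG E -> sg_lt x y ->
  exists2 z, z \in SG E & [&& sg_lt x z, sg_le z y & gsize z == (gsize x).+1].
Proof.
case: x y => [x1 x2] [y1 y2] xSG ySG /andP[/andP[/= le1 le2] nxy].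
have [eq1 | ne1] := eqVneq x1 y1; last first.
  have /subsetPn[v vy vx] : ~~ (y1 \subset x1).
    by apply: contra ne1 => le1'; rewrite eq_sym eqEsubset le1' le1.
  exists (v |: x1, x2); first exact: (SG_setU1_vertex v xSG).
  rewrite /sg_lt /sg_le /gsize /= subsetUr subxx subUset sub1set vy le1 le2.
  rewrite cardsU1 vx -pair_eqE /= eqxx andbT eq_sym add1n eqxx andbT.
  by apply: contraNneq vx => <-; rewrite setU11.
subst y1.
have /subsetPn[e ey ex] : ~~ (y2 \subset x2).
  by apply: contra nxy => le2'; rewrite -pair_eqE /= eqxx eqEsubset le2 le2'.
move: ySG; rewrite inE => /andP[yE /forall_inP yV].
have /andP[e1 e2] := yV e ey.
exists (x1, e |: x2); first exact: (SG_setU1_edge xSG (subsetP yE e ey) e1 e2).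
rewrite /sg_lt /sg_le /gsize /= subsetUr subxx subUset sub1set ey le2.
rewrite cardsU1 ex add1n addnS eqxx andbT -pair_eqE /= eqxx andbT eq_sym.
by apply: contraNneq ex => <-; rewrite setU11.
Qed.

Lemma SG_covers_gsize x y : covers_in (SG E) x y -> gsize y = (gsize x).+1.
Proof.
case/and4P=> xSG ySG xy /forall_inP between.
have [z zSG /and3P[xz zy /eqP <-]] := SG_lt_step xSG ySG xy.
by move: (between z zSG); rewrite xz /= /sg_lt zy /= negbK => /eqP <-.
Qed.

End Subgraphs.

Lemma minsize_le (V : finType) (P : {set sgraph V}) x :
  x \in P -> (minsize P <= gsize x)%N.
Proof. move=> xP; exact: (bigmin_le_cond _ (@gsize V) xP). Qed.

Lemma FmapE (A : AddCat) (V : finType) (Fob : sgraph V -> Ob A)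
    (Fmor : forall x y : sgraph V, sg_le x y -> Mor A (Fob x) (Fob y))
    x y (le_xy : sg_le x y) :
  Fmap Fmor x y = Fmor x y le_xy.
Proof.
rewrite /Fmap; move: (erefl (sg_le x y)); move: {2 3}(sg_le x y) => b.
by case: b => e; [rewrite (bool_irrelevance e le_xy) | rewrite le_xy in e].
Qed.

Section Cochains.
Variables (A : AddCat) (V : finType) (E : {set V * V}) (P : {set sgraph V}).
Variables (eps : sgraph V -> sgraph V -> bool) (Fob : sgraph V -> Ob A).
Variable Fmor : forall x y : sgraph V, sg_le x y -> Mor A (Fob x) (Fob y).
Hypotheses (P_squared : squared P) (P_faithful : faithful E P).
Hypotheses (eps_sign : sign_assignment P eps) (F_functor : is_functor P Fob Fmor).

Lemma covers_level x y : covers_in P x y -> level P y = (level P x).+1.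
Proof.
move=> xy; have /and4P[xP yP _ _] := xy.
rewrite P_faithful // in xy.
by rewrite /level (SG_covers_gsize xy) subSn // minsize_le.
Qed.

Lemma Fmap_covers_comp x y z : covers_in P x y -> covers_in P y z ->
  mcomp (Fmap Fmor y z) (Fmap Fmor x y) = Fmap Fmor x z.
Proof.
move=> xy yz; have /and4P[xP yP _ _] := xy; have /and4P[_ zP _ _] := yz.
have le_xy := covers_le xy; have le_yz := covers_le yz.
have le_xz := sg_le_trans le_xy le_yz.
rewrite (FmapE _ le_xy) (FmapE _ le_yz) (FmapE _ le_xz).
by case: F_functor => _ /(_ x y z le_xy le_yz le_xz xP yP zP).
Qed.

Lemma sum_sgn_interval n (Z : zmodType) (f : Z) x z :
  \sum_(y : lvl P n | covers_in P x (val y) && covers_in P (val y) z)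
     sgn (eps x (val y) (+) eps (val y) z) f = 0.
Proof.
have [y /andP[xy yz] | none] := pickP
  [pred y : lvl P n | covers_in P x (val y) && covers_in P (val y) z]; last first.
  by rewrite big_pred0.
have [y' [[ne_y' [xy' y'z]] y'_uniq]] := P_squared xy yz.
have lvl_y' : (y' \in P) && (level P y' == n).
  case/and4P: (xy') => _ -> _ _; have /andP[_ /eqP <-] := valP y.
  by rewrite (covers_level xy') (covers_level xy) /=.
pose Y' : lvl P n := exist _ y' lvl_y'.
have ne_yY' : Y' != y by apply: contra ne_y' => /eqP <-.
rewrite (bigD1 y) ?xy ?yz // (bigD1 Y'); last by rewrite /= xy' y'z ne_yY'.
rewrite big1 => [|w /andP[/andP[/andP[xw wz] ne_wy] ne_wY']].
  by rewrite /= addr0 (eps_sign xy yz xy' y'z) 1?eq_sym // sgn_negb_cancel.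
case/eqP: ne_wY'; apply: val_inj; apply/esym/y'_uniq.
by split; [exact: ne_wy | exact: conj xw wz].
Qed.

Notation inj n := (bp_inj (fun K : lvl P n => Fob (val K))).
Notation proj n := (bp_proj (fun K : lvl P n => Fob (val K))).
Notation d := (differential P eps Fob Fmor).

Definition dcol n (H : lvl P n) : Mor A (Fob (val H)) (cochain P Fob n.+1) :=
  \sum_(H' : lvl P n.+1 | covers_in P (val H) (val H'))
     sgn (eps (val H) (val H')) (mcomp (inj n.+1 H') (Fmap Fmor (val H) (val H'))).

Lemma differentialE n : d n = \sum_(H : lvl P n) mcomp (dcol H) (proj n H).
Proof.
apply: eq_bigr => H _; rewrite mcomp_summ; apply: eq_bigr => H' _.
by rewrite mcomp_sgnm Defs.compA.
Qed.

Lemma differential_inj n (H : lvl P n) : mcomp (d n) (inj n H) = dcol H.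
Proof. by rewrite differentialE bp_copair_inj. Qed.

Lemma differential_dcol n (H : lvl P n) :
  mcomp (d n.+1) (dcol H) =
  \sum_(K : lvl P n.+2)
    \sum_(H' : lvl P n.+1 | covers_in P (val H) (val H') && covers_in P (val H') (val K))
      sgn (eps (val H) (val H') (+) eps (val H') (val K))
        (mcomp (inj n.+2 K) (Fmap Fmor (val H) (val K))).
Proof.
rewrite mcompm_sum.
under eq_bigr => H' HH'.
  rewrite mcompm_sgn Defs.compA differential_inj mcomp_summ sgn_sum.
  under eq_bigr => K H'K.
    by rewrite mcomp_sgnm sgn_addb -Defs.compA (Fmap_covers_comp HH' H'K) over.
  over.
by rewrite (exchange_big_dep predT).
Qed.

End Cochains.

Theorem theorem3p7 (A : AddCat) (V : finType) (E : {set V * V})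
    (E_noloop : forall v : V, (v, v) \notin E)
    (P : {set sgraph V}) (P_sub : P \subset SG E)
    (P_squared : squared P) (P_faithful : faithful E P)
    (eps : sgraph V -> sgraph V -> bool) (eps_sign : sign_assignment P eps)
    (Fob : sgraph V -> Ob A)
    (Fmor : forall x y : sgraph V, sg_le x y -> Mor A (Fob x) (Fob y))
    (F_functor : is_functor P Fob Fmor) (n : nat) :
  mcomp (differential P eps Fob Fmor n.+1) (differential P eps Fob Fmor n) = 0%R.
Proof.
rewrite [differential _ _ _ _ n]differentialE mcompm_sum big1 // => H _.
rewrite Defs.compA (differential_dcol eps F_functor) big1 ?mcomp0m // => K _.
exact: (sum_sgn_interval P_squared P_faithful eps_sign n.+1 _ (val H) (val K)).
Qed.
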